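(* Let $n\geq 2$. Then $C(r_{1/n})=P_n\rtimes\mathcal{E}^n_\Delta$; that is, $P_n$ is a normal subgroup of $C(r_{1/n})$, $P_n\cap\mathcal{E}^n_\Delta$ is trivial, and $C(r_{1/n})=P_n\cdot\mathcal{E}^n_\Delta$.
   Context: Identify $\mathbb{T}^1=\mathbb{R}/\mathbb{Z}$ with $[0,1)$. An interval exchange transformation is a bijection of $\mathbb{T}^1$ that is a translation on each piece of some partition of $[0,1)$ into finitely many half-open intervals $[a,b)$; $\mathcal{E}$ is the group of these. $C(f)=\{g\in\mathcal{E}:fg=gf\}$. $r_{1/n}(x)=x+1/n$. Let $I_i=[\frac{i-1}{n},\frac{i}{n})$, $1\le i\le n$. $\mathcal{E}^n_\Delta=\{g\in C(r_{1/n}): g(I_i)=I_i \text{ for } 1\le i\le n\}$. $P_n=\{g\in C(r_{1/n}):$ for every $x\in\mathbb{T}^1$ there is $k\in\mathbb{Z}$ with $g(x)=x+k/n \pmod 1\}$. *)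

(* concrete reals R. The circle T^1 = R/Z is identified with
   [0,1); maps are functions R -> R, of which only the values on [0,1) matter. *)
From Stdlib Require Export Reals.
Open Scope R_scope.

Definition in01 (x : R) : Prop := 0 <= x < 1.

Definition mod1 (x : R) : R := x - IZR (Int_part x).

Definition bij01 (f : R -> R) : Prop :=
  (forall x, in01 x -> in01 (f x)) /\
  (forall x y, in01 x -> in01 y -> f x = f y -> x = y) /\
  (forall y, in01 y -> exists x, in01 x /\ f x = y).

Definition IET (f : R -> R) : Prop :=
  bij01 f /\
  exists (k : nat) (a t : nat -> R),
    a O = 0 /\ a k = 1 /\
    (forall i, (i < k)%nat -> a i < a (S i)) /\
    (forall i x, (i < k)%nat -> a i <= x < a (S i) -> f x = mod1 (x + t i)).

Definition feq (f g : R -> R) : Prop := forall x, in01 x -> f x = g x.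

Definition idT (x : R) : R := x.

Definition rot (n : nat) (x : R) : R := mod1 (x + / INR n).

Definition Crot (n : nat) (g : R -> R) : Prop :=
  IET g /\ feq (fun x => g (rot n x)) (fun x => rot n (g x)).

Definition Iint (n i : nat) (x : R) : Prop :=
  INR (i - 1) / INR n <= x < INR i / INR n.

Definition EDelta (n : nat) (g : R -> R) : Prop :=
  Crot n g /\
  forall i, (1 <= i <= n)%nat ->
    (forall x, Iint n i x -> Iint n i (g x)) /\
    (forall y, Iint n i y -> exists x, Iint n i x /\ g x = y).

Definition Pn (n : nat) (g : R -> R) : Prop :=
  Crot n g /\
  forall x, in01 x -> exists k : Z, g x = mod1 (x + IZR k / INR n).

Definition inv01 (g g' : R -> R) : Prop :=
  feq (fun x => g' (g x)) idT /\ feq (fun x => g (g' x)) idT.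

From Stdlib Require Import Lra Lia ZArith List ClassicalEpsilon Classical.

(* An element [g] of C(r_{1/n}) commutes with all shifts by multiples of [1/n],
   so it induces a map of the circle R/(1/n)Z. Letting that map act inside each
   interval I_i gives an element [diag_part n g] of E^n_Delta, and [g] differs
   from it pointwise by a multiple of [1/n]; hence [g] composed with its inverse
   lies in P_n. The real work is to see that these maps are again interval
   exchanges: we describe an interval exchange by finitely many cut points
   between which it translates mod 1, a description stable under composition,
   inversion and the construction of [diag_part]. Normality of P_n holds because
   shifts by [k/n] commute with C(r_{1/n}); P_n meets E^n_Delta trivially because
   a nontrivial shift by [k/n] moves every point to another interval I_j. *)

(** * Reduction mod 1 *)

Lemma Int_part_unique (z : R) (m : Z) : IZR m <= z < IZR m + 1 -> Int_part z = m.
Proof.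
  intros [Hl Hu]; unfold Int_part.
  rewrite <- (tech_up z (m + 1)); rewrite ?plus_IZR; simpl; lra || lia.
Qed.

Lemma Int_part_bounds (z : R) : IZR (Int_part z) <= z < IZR (Int_part z) + 1.
Proof. destruct (base_Int_part z); lra. Qed.

Lemma Int_part_add_IZR (z : R) (m : Z) : Int_part (z + IZR m) = (Int_part z + m)%Z.
Proof. apply Int_part_unique; rewrite plus_IZR; pose proof (Int_part_bounds z); lra. Qed.

Lemma mod1_in01 (z : R) : in01 (mod1 z).
Proof. unfold in01, mod1; pose proof (Int_part_bounds z); lra. Qed.

Lemma mod1_int_shift (z : R) : exists m : Z, mod1 z = z + IZR m.
Proof. exists (- Int_part z)%Z; unfold mod1; rewrite opp_IZR; lra. Qed.

Lemma mod1_unique (w z : R) (m : Z) : in01 w -> w = z + IZR m -> w = mod1 z.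
Proof.
  intros [Hl Hu] ->; unfold mod1.
  rewrite (Int_part_unique z (- m)); rewrite opp_IZR; lra.
Qed.

Lemma mod1_id (z : R) : in01 z -> mod1 z = z.
Proof. intros Hz; symmetry; apply (mod1_unique z z 0); simpl; auto; lra. Qed.

Lemma mod1_add_IZR (z : R) (m : Z) : mod1 (z + IZR m) = mod1 z.
Proof.
  destruct (mod1_int_shift z) as [k Hk]; symmetry.
  apply (mod1_unique _ _ (k - m)); [apply mod1_in01 | rewrite Hk, minus_IZR; lra].
Qed.

Lemma mod1_addl (a b : R) : mod1 (mod1 a + b) = mod1 (a + b).
Proof.
  destruct (mod1_int_shift a) as [k ->].
  replace (a + IZR k + b) with (a + b + IZR k) by lra; apply mod1_add_IZR.
Qed.

Lemma in01_int_diff_0 (a b : R) (m : Z) : in01 a -> in01 b -> a = b + IZR m -> m = 0%Z.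
Proof.
  intros [Ha Ha'] [Hb Hb'] E.
  assert (-1 < m)%Z by (apply lt_IZR; simpl; lra).
  assert (m < 1)%Z by (apply lt_IZR; simpl; lra).
  lia.
Qed.

(** * Interval exchanges as piecewise translations *)

Definition cut_free (S : list R) (x y : R) : Prop := forall s, In s S -> ~ (x < s <= y).

(* Breakpoint form of an interval exchange; unlike the partition in [IET], it is
   easily seen to be stable under composition. *)
Definition piecewise_translation (f : R -> R) (S : list R) : Prop :=
  forall x y, 0 <= x -> x <= y -> y < 1 -> cut_free S x y ->
  exists m : Z, f y - y = f x - x + IZR m.

Lemma partition_piece (k : nat) (a : nat -> R) (x : R) :
  a O = 0 -> a k = 1 -> (forall i, (i < k)%nat -> a i < a (S i)) -> 0 <= x < 1 ->
  exists i, (i < k)%nat /\ 0 <= a i /\ a i <= x < a (S i).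
Proof.
  intros H0 Hk Hinc Hx.
  enough (Hind : forall d j, (j + d = k)%nat -> 0 <= a j <= x ->
            exists i, (i < k)%nat /\ 0 <= a i /\ a i <= x < a (S i))
    by (apply (Hind k O); lia || lra).
  induction d as [|d IH]; intros j Hj Hja.
  - replace j with k in Hja by lia; lra.
  - pose proof (Hinc j ltac:(lia)); destruct (Rlt_dec x (a (S j))).
    + exists j; split; [lia | lra].
    + apply (IH (S j)); [lia | lra].
Qed.

Lemma IET_piecewise_translation (f : R -> R) :
  IET f -> exists S, piecewise_translation f S.
Proof.
  intros [_ [k [a [t [H0 [Hk [Hinc Htr]]]]]]].
  exists (map a (seq 0 (S k))); intros x y Hx Hxy Hy Hcut.
  destruct (partition_piece k a x H0 Hk Hinc ltac:(lra)) as [i [Hi Hxi]].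
  assert (Hyi : y < a (S i)).
  { apply Rnot_le_lt; intros Hle; apply (Hcut (a (S i))); [|lra].
    apply in_map, in_seq; lia. }
  rewrite (Htr i x Hi ltac:(lra)), (Htr i y Hi ltac:(lra)).
  exists (Int_part (x + t i) - Int_part (y + t i))%Z; unfold mod1; rewrite minus_IZR; lra.
Qed.

Section CutSequence.

Variable L : list R.

Definition next_cut (x : R) : R :=
  fold_right (fun s acc => if Rlt_dec x s then if Rlt_dec s acc then s else acc else acc) 1 L.

Lemma next_cut_spec (x : R) :
  (next_cut x = 1 \/ (In (next_cut x) L /\ x < next_cut x)) /\ next_cut x <= 1.
Proof.
  unfold next_cut; induction L as [|h l [[E | [Hin Hlt]] Hle]]; simpl; [split; auto; lra| |];
    destruct (Rlt_dec x h); try destruct (Rlt_dec h _); split; auto; lra.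
Qed.

Lemma next_cut_least (x s : R) : In s L -> x < s -> next_cut x <= s.
Proof.
  unfold next_cut; induction L as [|h l IH]; simpl; [tauto|]; intros [-> | Hin] Hxs;
    [| specialize (IH Hin Hxs)];
    destruct (Rlt_dec x _); try destruct (Rlt_dec _ (fold_right _ 1 l)); lra.
Qed.

Fixpoint count_above (x : R) (l : list R) : nat :=
  match l with
  | nil => O
  | s :: l => ((if Rlt_dec x s then 1 else 0) + count_above x l)%nat
  end.

Lemma count_above_le_length (x : R) (l : list R) : (count_above x l <= length l)%nat.
Proof. induction l as [|s l IH]; simpl; [lia | destruct (Rlt_dec x s); lia]. Qed.

Lemma count_above_antimono (x y : R) (l : list R) :
  x <= y -> (count_above y l <= count_above x l)%nat.
Proof.
  intros Hxy; induction l as [|s l IH]; simpl; [lia|].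
  destruct (Rlt_dec y s), (Rlt_dec x s); lia || lra.
Qed.

Lemma count_above_drop (x y : R) (l : list R) :
  x < y -> In y l -> (count_above y l < count_above x l)%nat.
Proof.
  intros Hxy; induction l as [|s l IH]; simpl; [tauto|]; intros [-> | Hin].
  - pose proof (count_above_antimono x y l ltac:(lra)).
    destruct (Rlt_dec y y), (Rlt_dec x y); lia || lra.
  - specialize (IH Hin); destruct (Rlt_dec y s), (Rlt_dec x s); lia || lra.
Qed.

Definition cut_seq (i : nat) : R := Nat.iter i next_cut 0.

Lemma cut_seq_bounds (i : nat) : 0 <= cut_seq i <= 1.
Proof.
  induction i as [|i IH]; [simpl; lra|]; change (cut_seq (S i)) with (next_cut (cut_seq i)).
  destruct (next_cut_spec (cut_seq i)) as [[E | [_ Hlt]] Hle]; lra.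
Qed.

Lemma cut_seq_step (i : nat) : cut_seq i < 1 -> cut_seq i < cut_seq (S i).
Proof.
  intros Hi; change (cut_seq (S i)) with (next_cut (cut_seq i)).
  destruct (next_cut_spec (cut_seq i)) as [[E | [_ Hlt]] _]; lra.
Qed.

Lemma cut_seq_le_S (i : nat) : cut_seq i <= cut_seq (S i).
Proof.
  change (cut_seq (S i)) with (next_cut (cut_seq i)).
  pose proof (cut_seq_bounds i); destruct (next_cut_spec (cut_seq i)) as [[E | [_ Hlt]] _]; lra.
Qed.

Lemma cut_seq_mono (i j : nat) : (i <= j)%nat -> cut_seq i <= cut_seq j.
Proof. induction 1 as [|j _ IH]; [lra | pose proof (cut_seq_le_S j); lra]. Qed.

(* Termination: each step below 1 passes a point of [L] and never returns. *)
Lemma cut_seq_progress (i : nat) :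
  cut_seq i = 1 \/ (cut_seq i < 1 /\ (count_above (cut_seq i) L + i <= length L)%nat).
Proof.
  induction i as [|i [E | [Hlt Hc]]].
  - right; split; [simpl; lra | pose proof (count_above_le_length 0 L); simpl; lia].
  - left; pose proof (cut_seq_le_S i); pose proof (cut_seq_bounds (S i)); lra.
  - change (cut_seq (S i)) with (next_cut (cut_seq i)).
    destruct (next_cut_spec (cut_seq i)) as [[E | [Hin Hl]] Hle]; auto.
    destruct (Req_dec (next_cut (cut_seq i)) 1) as [E|]; auto.
    right; split; [lra|]; pose proof (count_above_drop _ _ L Hl Hin); lia.
Qed.

Lemma cut_seq_first_1 : exists k, cut_seq k = 1 /\ forall i, (i < k)%nat -> cut_seq i < 1.
Proof.
  assert (Hend : cut_seq (S (length L)) = 1)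
    by (destruct (cut_seq_progress (S (length L))) as [|[_ Hc]]; auto; lia).
  revert Hend; generalize (S (length L)); induction n as [|m IH]; intros Hm.
  - exists O; split; auto; lia.
  - destruct (Req_dec (cut_seq m) 1) as [E|Hne]; auto.
    exists (S m); split; auto; intros i Hi.
    pose proof (cut_seq_mono i m ltac:(lia)); pose proof (cut_seq_bounds m); lra.
Qed.

Lemma cut_seq_cut_free (i : nat) (x : R) : x < cut_seq (S i) -> cut_free L (cut_seq i) x.
Proof.
  intros Hx s Hs [Hl Hu]; pose proof (next_cut_least _ s Hs Hl).
  change (next_cut (cut_seq i)) with (cut_seq (S i)) in *; lra.
Qed.

End CutSequence.

Lemma piecewise_translation_IET (f : R -> R) (L : list R) :
  bij01 f -> piecewise_translation f L -> IET f.
Proof.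
  intros Hb HP; split; auto.
  destruct (cut_seq_first_1 L) as [k [Hk Hlt]].
  exists k, (cut_seq L), (fun i => f (cut_seq L i) - cut_seq L i).
  split; [reflexivity|]; split; [exact Hk|]; split; [intros i Hi; apply cut_seq_step; auto|].
  intros i x Hi Hx; pose proof (cut_seq_bounds L i); pose proof (cut_seq_bounds L (S i)).
  destruct (HP (cut_seq L i) x) as [m Hm]; try lra; [apply cut_seq_cut_free; lra|].
  apply (mod1_unique _ _ m); [apply Hb; unfold in01 | ]; lra.
Qed.

Lemma bij01_comp (f g : R -> R) : bij01 f -> bij01 g -> bij01 (fun x => f (g x)).
Proof.
  intros [Fi [Fj Fs]] [Gi [Gj Gs]]; split; [|split]; auto.
  intros y Hy; destruct (Fs y Hy) as [w [Hw <-]]; destruct (Gs w Hw) as [x [Hx <-]]; eauto.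
Qed.

Lemma bij01_inv01 (g g' : R -> R) :
  bij01 g -> inv01 g g' -> forall y, in01 y -> in01 (g' y) /\ g (g' y) = y.
Proof.
  intros [_ [_ Gs]] [I1 I2] y Hy; split; [|apply I2; auto].
  destruct (Gs y Hy) as [x [Hx <-]]; rewrite (I1 x Hx); auto.
Qed.

Lemma bij01_exists_inv01 (f : R -> R) : bij01 f -> exists f', inv01 f f'.
Proof.
  intros [Fi [Fj Fs]].
  assert (Hpre : forall y, exists x, in01 y -> in01 x /\ f x = y).
  { intros y; destruct (classic (in01 y)) as [Hy|Hy].
    - destruct (Fs y Hy) as [x Hx]; eauto.
    - exists 0; tauto. }
  exists (fun y => proj1_sig (constructive_indefinite_description _ (Hpre y))).
  split; intros x Hx; unfold idT;
    destruct (constructive_indefinite_description _ _) as [w Hw]; simpl.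
  - destruct (Hw (Fi x Hx)); apply Fj; auto.
  - apply Hw; auto.
Qed.

Definition preimage_list (g : R -> R) (D L : list R) : Prop :=
  forall s z, In s D -> in01 z -> g z = s -> In z L.

Lemma bij01_preimage_list (g : R -> R) (D : list R) : bij01 g -> exists L, preimage_list g D L.
Proof.
  intros [Gi [Gj Gs]]; induction D as [|s D [L HL]].
  { exists nil; intros s z []. }
  destruct (classic (in01 s)) as [Hs|Hs].
  - destruct (Gs s Hs) as [w [Hw Hgw]]; exists (w :: L).
    intros s' z [<- | Hs'] Hz Hgz; [left; apply Gj; congruence | right; eauto].
  - exists L; intros s' z [<- | Hs'] Hz Hgz; [subst; destruct (Hs (Gi z Hz)) | eauto].
Qed.

(* A translation mod 1 that is not an honest translation must wrap around,
   i.e. take the value 0 somewhere. *)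
Lemma piecewise_translation_exact (g : R -> R) (S : list R) (x y : R) :
  bij01 g -> piecewise_translation g S -> 0 <= x -> x <= y -> y < 1 -> cut_free S x y ->
  (forall z, x < z <= y -> g z <> 0) -> g y = g x + (y - x).
Proof.
  intros [Gi _] HP Hx Hxy Hy Hcut Hne0.
  destruct (HP x y Hx Hxy Hy Hcut) as [m Hm].
  pose proof (Gi x ltac:(split; lra)) as [Gx Gx'].
  pose proof (Gi y ltac:(split; lra)) as [Gy Gy'].
  assert (Hm1 : (m < 1)%Z) by (apply lt_IZR; simpl; lra).
  assert (Hm2 : (-2 < m)%Z) by (apply lt_IZR; simpl; lra).
  destruct (Z.eq_dec m 0) as [-> | Hm0]; [simpl in Hm; lra | exfalso].
  assert (m = -1)%Z by lia; subst m; simpl in Hm.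
  set (z := x + (1 - g x)).
  destruct (HP x z Hx ltac:(unfold z; lra) ltac:(unfold z; lra)) as [m' Hm'].
  { intros s Hs [Hl Hu]; apply (Hcut s Hs); unfold z in *; lra. }
  apply (Hne0 z); [unfold z; lra|].
  assert (E : g z = 0 + IZR (m' + 1)) by (rewrite plus_IZR; unfold z in *; simpl; lra).
  assert (Gz : in01 (g z)) by (apply Gi; unfold z, in01; lra).
  rewrite E, (in01_int_diff_0 _ 0 _ Gz ltac:(split; lra) E); simpl; lra.
Qed.

Lemma translation_between_cuts (g : R -> R) (S D L : list R) (x y : R) :
  bij01 g -> piecewise_translation g S -> preimage_list g (0 :: D) L ->
  0 <= x -> x <= y -> y < 1 -> cut_free (S ++ L) x y ->
  (forall z, x <= z <= y -> g z = g x + (z - x)) /\ cut_free D (g x) (g y).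
Proof.
  intros Hg HP HL Hx Hxy Hy Hcut.
  assert (HcutL : forall z, x < z <= y -> ~ In z L)
    by (intros z Hz Hin; apply (Hcut z); [apply in_or_app|]; auto).
  assert (Hlin : forall z, x <= z <= y -> g z = g x + (z - x)).
  { intros z Hz; apply (piecewise_translation_exact g S); try lra.
    - exact Hg.
    - exact HP.
    - intros s Hs [Hl Hu]; apply (Hcut s); [apply in_or_app|]; auto; lra.
    - intros w Hw E; apply (HcutL w); [lra|]; apply (HL 0); [left|split|]; auto; lra. }
  split; [exact Hlin|].
  destruct Hg as [Gi _]; pose proof (Gi y ltac:(split; lra)).
  intros s Hs [Hl Hu]; set (z := x + (s - g x)).
  pose proof (Hlin y ltac:(lra)); pose proof (Hlin z ltac:(unfold z; lra)).
  apply (HcutL z); [unfold z; lra|].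
  apply (HL s); [right; auto | unfold z, in01; lra | unfold z in *; lra].
Qed.

Lemma IET_comp (f g : R -> R) : IET f -> IET g -> IET (fun x => f (g x)).
Proof.
  intros HF HG.
  destruct (IET_piecewise_translation f HF) as [Sf HPf].
  destruct (IET_piecewise_translation g HG) as [Sg HPg].
  destruct (bij01_preimage_list g (0 :: Sf) (proj1 HG)) as [L HL].
  apply (piecewise_translation_IET _ (Sg ++ L)); [apply bij01_comp; [apply HF | apply HG]|].
  intros x y Hx Hxy Hy Hcut.
  destruct (translation_between_cuts g Sg Sf L x y (proj1 HG) HPg HL Hx Hxy Hy Hcut)
    as [Hlin Hcutf].
  pose proof (Hlin y ltac:(lra)); pose proof (proj1 (proj1 HG) x ltac:(split; lra)) as [Gx _].
  pose proof (proj1 (proj1 HG) y ltac:(split; lra)) as [_ Gy].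
  destruct (HPf (g x) (g y) Gx ltac:(lra) Gy Hcutf) as [m Hm]; exists m; lra.
Qed.

(* The cuts of [g'] are the images of the left endpoints of the pieces of [g]. *)
Lemma IET_inv (g g' : R -> R) : IET g -> inv01 g g' -> IET g'.
Proof.
  intros HG HI; pose proof (bij01_inv01 g g' (proj1 HG) HI) as Hinv.
  destruct HG as [[Gi [Gj Gs]] [k [a [t [H0 [Hk [Hinc Htr]]]]]]].
  apply (piecewise_translation_IET _ (map (fun i => g (a i)) (seq 0 k))).
  { split; [|split].
    - intros y Hy; apply Hinv; auto.
    - intros x y Hx Hy E; rewrite <- (proj2 (Hinv x Hx)), <- (proj2 (Hinv y Hy)), E; auto.
    - intros x Hx; exists (g x); split; auto; apply HI; auto. }
  intros y1 y2 Hy1 Hy12 Hy2 Hcut.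
  destruct (Hinv y2 ltac:(split; lra)) as [[X2 X2'] E2]; set (x2 := g' y2) in *.
  destruct (partition_piece k a x2 H0 Hk Hinc ltac:(lra)) as [i [Hi Hpiece]].
  assert (Hshift : forall z, a i <= z <= x2 -> in01 (y2 + (z - x2)) -> g z = y2 + (z - x2)).
  { intros z Hz Hin; destruct (mod1_int_shift (x2 + t i)) as [m Hm].
    rewrite (Htr i z Hi ltac:(lra)); symmetry; apply (mod1_unique _ _ m Hin).
    rewrite <- E2, (Htr i x2 Hi ltac:(lra)), Hm; ring. }
  destruct (Rle_dec (a i) (x2 - (y2 - y1))) as [Hle | Hlt].
  - assert (Gz : g (x2 - (y2 - y1)) = y1) by (rewrite Hshift; [ring | lra | split; lra]).
    assert (X1 : g' y1 = x2 - (y2 - y1)) by (rewrite <- Gz at 1; apply HI; split; lra).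
    exists 0%Z; rewrite X1; simpl; unfold x2; lra.
  - exfalso; apply (Hcut (g (a i))); [apply (in_map (fun j => g (a j))), in_seq; lia|].
    rewrite Hshift; [lra | lra | split; lra].
Qed.

Lemma IET_feq (f g : R -> R) : IET f -> feq f g -> IET g.
Proof.
  intros HF He; destruct (IET_piecewise_translation f HF) as [S HP].
  destruct HF as [[Fi [Fj Fs]] _]; apply (piecewise_translation_IET _ S).
  - split; [|split].
    + intros x Hx; rewrite <- He; auto.
    + intros x y Hx Hy; rewrite <- !He; auto.
    + intros y Hy; destruct (Fs y Hy) as [x [Hx E]]; exists x; rewrite <- He; auto.
  - intros x y Hx Hxy Hy Hcut; rewrite <- !He by (split; lra); auto.
Qed.

Lemma IET_id : IET idT.
Proof.
  apply (piecewise_translation_IET _ nil); [unfold idT; split; [|split]; eauto|].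
  intros x y _ _ _ _; exists 0%Z; unfold idT; simpl; lra.
Qed.

(** * Maps commuting with [r_{1/n}] *)

Lemma iter_rot (n j : nat) (y : R) :
  (1 <= n)%nat -> in01 y -> Nat.iter j (rot n) y = mod1 (y + INR j / INR n).
Proof.
  intros Hn Hy; pose proof (lt_0_INR n Hn); induction j as [|j IH]; simpl Nat.iter.
  - replace (y + INR 0 / INR n) with y by (simpl; field; lra); rewrite mod1_id; auto.
  - rewrite IH; unfold rot; rewrite mod1_addl, S_INR; f_equal; field; lra.
Qed.

(* A shift by [k/n] with [k] negative is also an iterate of [rot n], since
   [k + n |k| >= 0]. *)
Lemma mod1_shift_iter_rot (n : nat) (k : Z) (y : R) : (1 <= n)%nat -> in01 y ->
  mod1 (y + IZR k / INR n) = Nat.iter (Z.to_nat (k + Z.of_nat n * Z.abs k)) (rot n) y.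
Proof.
  intros Hn Hy; pose proof (lt_0_INR n Hn); rewrite iter_rot by auto.
  rewrite (INR_IZR_INZ (Z.to_nat _)), Z2Nat.id by (destruct (Z.abs_spec k) as [[? ->]|[? ->]]; nia).
  rewrite plus_IZR, mult_IZR, <- INR_IZR_INZ.
  replace (y + (IZR k + INR n * IZR (Z.abs k)) / INR n)
    with (y + IZR k / INR n + IZR (Z.abs k)) by (field; lra).
  symmetry; apply mod1_add_IZR.
Qed.

Lemma Crot_in01 (n : nat) (g : R -> R) (x : R) : Crot n g -> in01 x -> in01 (g x).
Proof. intros Hg; apply (proj1 (proj1 (proj1 Hg))). Qed.

Lemma Crot_commute_shift (n : nat) (g : R -> R) (k : Z) (y : R) :
  (1 <= n)%nat -> Crot n g -> in01 y ->
  g (mod1 (y + IZR k / INR n)) = mod1 (g y + IZR k / INR n).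
Proof.
  intros Hn Hg Hy; rewrite !mod1_shift_iter_rot by (auto; apply (Crot_in01 n); auto).
  induction (Z.to_nat _) as [|j IH]; simpl; auto.
  rewrite (proj2 Hg), IH; auto; destruct j; [auto | apply mod1_in01].
Qed.

Lemma Crot_comp (n : nat) (g h : R -> R) : Crot n g -> Crot n h -> Crot n (fun x => g (h x)).
Proof.
  intros [Gi Gc] [Hi Hc]; split; [apply IET_comp; auto|].
  intros x Hx; simpl; rewrite Hc, Gc; auto; apply (proj1 (proj1 Hi)); auto.
Qed.

Lemma Crot_inv (n : nat) (g g' : R -> R) : Crot n g -> inv01 g g' -> Crot n g'.
Proof.
  intros [Gi Gc] HI; split; [apply (IET_inv g); auto|].
  intros x Hx; destruct (bij01_inv01 g g' (proj1 Gi) HI x Hx) as [Y E]; simpl.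
  rewrite <- E at 1; rewrite <- Gc by auto; apply HI, mod1_in01.
Qed.

Lemma Crot_feq (n : nat) (f g : R -> R) : Crot n f -> feq f g -> Crot n g.
Proof.
  intros [Fi Fc] He; split; [apply (IET_feq f); auto|].
  intros x Hx; simpl; rewrite <- (He (rot n x)), <- (He x) by (auto; apply mod1_in01); auto.
Qed.

Lemma Crot_id (n : nat) : Crot n idT.
Proof. split; [apply IET_id | intros x Hx; reflexivity]. Qed.

Lemma Pn_id (n : nat) : (1 <= n)%nat -> Pn n idT.
Proof.
  intros Hn; pose proof (lt_0_INR n Hn); split; [apply Crot_id|].
  intros x Hx; exists 0%Z; unfold idT.
  replace (x + 0 / INR n) with x by (field; lra); rewrite mod1_id; auto.
Qed.

Lemma Pn_comp (n : nat) (g h : R -> R) : Pn n g -> Pn n h -> Pn n (fun x => g (h x)).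
Proof.
  intros [Gc Gp] [Hc Hp]; split; [apply Crot_comp; auto|].
  intros x Hx; destruct (Hp x Hx) as [k Hk]; destruct (Gp _ (Crot_in01 n h x Hc Hx)) as [k' Hk'].
  exists (k + k')%Z; rewrite Hk', Hk, mod1_addl, plus_IZR; f_equal; unfold Rdiv; ring.
Qed.

Lemma Pn_inv (n : nat) (g g' : R -> R) : Pn n g -> inv01 g g' -> Pn n g'.
Proof.
  intros [Gc Gp] HI; split; [apply (Crot_inv n g); auto|].
  intros x Hx; destruct (bij01_inv01 g g' (proj1 (proj1 Gc)) HI x Hx) as [Y E].
  destruct (Gp _ Y) as [k Hk]; destruct (mod1_int_shift (g' x + IZR k / INR n)) as [m Hm].
  exists (- k)%Z; apply (mod1_unique _ _ (- m) Y).
  unfold Rdiv; rewrite !opp_IZR; unfold Rdiv in Hm; lra.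
Qed.

Lemma Pn_conj (n : nat) (g g' h : R -> R) : (1 <= n)%nat -> Crot n g -> inv01 g g' -> Pn n h ->
  Pn n (fun x => g (h (g' x))).
Proof.
  intros Hn Gc HI [Hc Hp]; split.
  { apply Crot_comp; [|apply Crot_comp]; auto; apply (Crot_inv n g); auto. }
  intros x Hx; destruct (bij01_inv01 g g' (proj1 (proj1 Gc)) HI x Hx) as [Y E].
  destruct (Hp _ Y) as [k Hk]; exists k; rewrite Hk, Crot_commute_shift, E; auto.
Qed.

(** * The intervals [I_i] *)

(* Cells are numbered from 0, the intervals [Iint n i] from 1. *)
Definition cell (n : nat) (x : R) : Z := Int_part (INR n * x).

Lemma cell_split (n : nat) (y : R) : INR n * y = IZR (cell n y) + mod1 (INR n * y).
Proof. unfold cell, mod1; ring. Qed.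

Lemma cell_range (n : nat) (x : R) :
  (1 <= n)%nat -> in01 x -> (0 <= cell n x <= Z.of_nat n - 1)%Z.
Proof.
  intros Hn [Hx Hx']; pose proof (lt_0_INR n Hn).
  pose proof (Int_part_bounds (INR n * x)) as [Hl Hu]; fold (cell n x) in Hl, Hu.
  assert (0 <= INR n * x < INR n) by nra; rewrite INR_IZR_INZ in *.
  assert (-1 < cell n x)%Z by (apply lt_IZR; simpl; lra).
  assert (cell n x < Z.of_nat n)%Z by (apply lt_IZR; lra).
  lia.
Qed.

Lemma Iint_cell (n i : nat) (x : R) :
  (1 <= i <= n)%nat -> Iint n i x <-> cell n x = Z.of_nat (i - 1).
Proof.
  intros Hi; pose proof (lt_0_INR n ltac:(lia)).
  assert (Ei : INR i = INR (i - 1) + 1) by (rewrite <- S_INR; f_equal; lia).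
  assert (Hdiv : forall j, INR j / INR n = / INR n * INR j) by (intros; unfold Rdiv; ring).
  unfold Iint; rewrite !Hdiv; split.
  - intros [Hl Hu]; apply Int_part_unique; rewrite <- INR_IZR_INZ.
    apply (Rmult_le_compat_l (INR n)) in Hl; apply (Rmult_lt_compat_l (INR n)) in Hu; try lra.
    rewrite <- !Rmult_assoc, Rinv_r, !Rmult_1_l in Hl, Hu by lra; lra.
  - intros E; pose proof (Int_part_bounds (INR n * x)) as [Hl Hu].
    fold (cell n x) in Hl, Hu; rewrite E, <- INR_IZR_INZ in Hl, Hu; split.
    + apply (Rmult_le_reg_l (INR n)); [lra|]; rewrite <- Rmult_assoc, Rinv_r by lra; lra.
    + apply (Rmult_lt_reg_l (INR n)); [lra|]; rewrite <- Rmult_assoc, Rinv_r by lra; lra.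
Qed.

Lemma cell_Iint (n : nat) (x : R) : (1 <= n)%nat -> in01 x ->
  exists i, (1 <= i <= n)%nat /\ cell n x = Z.of_nat (i - 1).
Proof.
  intros Hn Hx; pose proof (cell_range n x Hn Hx).
  exists (S (Z.to_nat (cell n x))); split; [lia|].
  replace (S (Z.to_nat (cell n x)) - 1)%nat with (Z.to_nat (cell n x)) by lia; lia.
Qed.

Lemma Iint_in01 (n i : nat) (x : R) : (1 <= i <= n)%nat -> Iint n i x -> in01 x.
Proof.
  intros Hi Hx; pose proof (lt_0_INR n ltac:(lia)).
  assert (INR (i - 1) + 1 <= INR n) by (rewrite <- S_INR; apply le_INR; lia).
  pose proof (pos_INR (i - 1)); destruct Hx as [Hl Hu].
  apply (Rmult_le_compat_l (INR n)) in Hl; apply (Rmult_lt_compat_l (INR n)) in Hu; try lra.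
  replace (INR n * (INR (i - 1) / INR n)) with (INR (i - 1)) in Hl by (field; lra).
  replace (INR n * (INR i / INR n)) with (INR (i - 1) + 1) in Hu
    by (rewrite <- S_INR; replace (S (i - 1)) with i by lia; field; lra).
  split; nra.
Qed.

Lemma scaled_mod1_shift (n : nat) (k : Z) (x : R) : (1 <= n)%nat ->
  exists M : Z, INR n * mod1 (x + IZR k / INR n) = INR n * x + IZR (k + Z.of_nat n * M).
Proof.
  intros Hn; pose proof (lt_0_INR n Hn); destruct (mod1_int_shift (x + IZR k / INR n)) as [M ->].
  exists M; rewrite plus_IZR, mult_IZR, <- INR_IZR_INZ; field; lra.
Qed.

Lemma shift_same_cell (n : nat) (k : Z) (x : R) : (1 <= n)%nat ->
  cell n (mod1 (x + IZR k / INR n)) = cell n x -> mod1 (x + IZR k / INR n) = x.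
Proof.
  intros Hn Hcell; pose proof (lt_0_INR n Hn).
  destruct (scaled_mod1_shift n k x Hn) as [M HM].
  unfold cell at 1 in Hcell; rewrite HM, Int_part_add_IZR in Hcell.
  assert (Hzero : (k + Z.of_nat n * M = 0)%Z) by (unfold cell in Hcell; lia).
  rewrite Hzero in HM; apply (Rmult_eq_reg_l (INR n)); simpl in HM; lra.
Qed.

Lemma Pn_EDelta_id (n : nat) (g : R -> R) : (1 <= n)%nat -> Pn n g -> EDelta n g -> feq g idT.
Proof.
  intros Hn [_ Gp] [_ Ge] x Hx; unfold idT.
  destruct (cell_Iint n x Hn Hx) as [i [Hi Ei]]; destruct (Gp x Hx) as [k Hk].
  destruct (Ge i Hi) as [Gi _]; specialize (Gi x (proj2 (Iint_cell n i x Hi) Ei)).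
  rewrite Iint_cell, <- Ei, Hk in Gi by auto; rewrite Hk; apply shift_same_cell; auto.
Qed.

(** * The diagonal part of an element of [C(r_{1/n})] *)

Lemma cell_mod1_shift (n : nat) (k : Z) (x : R) : (1 <= n)%nat ->
  exists M : Z, cell n (mod1 (x + IZR k / INR n)) = (cell n x + k + Z.of_nat n * M)%Z.
Proof.
  intros Hn; destruct (scaled_mod1_shift n k x Hn) as [M HM]; exists M.
  unfold cell; rewrite HM, Int_part_add_IZR; lia.
Qed.

Definition cut_points (n : nat) : list R := map (fun j => INR j / INR n) (seq 0 (S n)).

Lemma cell_cut_free (n : nat) (u v : R) : (1 <= n)%nat -> 0 <= u -> u <= v -> v < 1 ->
  cut_free (cut_points n) u v -> cell n v = cell n u.
Proof.
  intros Hn Hu Huv Hv Hcut; pose proof (lt_0_INR n Hn).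
  pose proof (cell_range n u Hn ltac:(split; lra)).
  pose proof (Int_part_bounds (INR n * u)) as [Hl Hh]; fold (cell n u) in Hl, Hh.
  destruct (Rlt_dec (INR n * v) (IZR (cell n u) + 1)).
  - apply Int_part_unique; split; [nra | lra].
  - exfalso; apply (Hcut (INR (Z.to_nat (cell n u + 1)) / INR n)).
    + apply (in_map (fun j => INR j / INR n)), in_seq; lia.
    + rewrite INR_IZR_INZ, Z2Nat.id, plus_IZR by lia; split.
      * apply (Rmult_lt_reg_l (INR n)); [lra|]; field_simplify; lra.
      * apply (Rmult_le_reg_l (INR n)); [lra|]; field_simplify; lra.
Qed.

(* The element of [E^n_Delta] induced by [g]: on each interval [I_i] it acts as
   [g] does modulo [1/n], i.e. as the map induced by [g] on [R/(1/n)Z]. *)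
Definition diag_part (n : nat) (g : R -> R) (x : R) : R :=
  (IZR (cell n x) + mod1 (INR n * g x)) / INR n.

Section DiagPart.

Variables (n : nat) (g : R -> R).
Hypotheses (Hn : (1 <= n)%nat) (Hg : Crot n g).

Let Hn_pos : 0 < INR n := lt_0_INR n Hn.

Lemma cell_diag_part (x : R) : cell n (diag_part n g x) = cell n x.
Proof.
  unfold cell at 1, diag_part; apply Int_part_unique.
  replace (INR n * ((IZR (cell n x) + mod1 (INR n * g x)) / INR n))
    with (IZR (cell n x) + mod1 (INR n * g x)) by (field; lra).
  pose proof (mod1_in01 (INR n * g x)) as [? ?]; lra.
Qed.

Lemma diag_part_in01 (x : R) : in01 x -> in01 (diag_part n g x).
Proof.
  intros Hx; pose proof (cell_range n x Hn Hx) as [Hl Hu].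
  apply IZR_le in Hl; apply IZR_le in Hu; rewrite minus_IZR, <- INR_IZR_INZ in Hu.
  pose proof (mod1_in01 (INR n * g x)) as [? ?]; unfold diag_part; split.
  - apply Rmult_le_pos; [simpl in Hl; lra | left; apply Rinv_0_lt_compat; lra].
  - apply (Rmult_lt_reg_l (INR n)); [lra|]; field_simplify; simpl in Hu; lra.
Qed.

Lemma diag_part_shift (x : R) :
  g x = diag_part n g x + IZR (cell n (g x) - cell n x) / INR n.
Proof.
  unfold diag_part; rewrite minus_IZR.
  apply (Rmult_eq_reg_l (INR n)); [|lra]; rewrite (cell_split n (g x)) at 1; field; lra.
Qed.

Lemma diag_part_inj (x y : R) : in01 x -> in01 y -> diag_part n g x = diag_part n g y -> x = y.
Proof.
  intros Hx Hy E.
  assert (Hcell : cell n y = cell n x) by (rewrite <- cell_diag_part, <- E, cell_diag_part; auto).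
  set (K := (cell n (g y) - cell n (g x))%Z).
  assert (Hgy : g y = g (mod1 (x + IZR K / INR n))).
  { rewrite Crot_commute_shift by auto; apply (mod1_unique _ _ 0); [apply (Crot_in01 n); auto|].
    rewrite (diag_part_shift x), (diag_part_shift y), E, Hcell; unfold K; rewrite !minus_IZR.
    simpl; field; lra. }
  apply (proj1 (proj2 (proj1 (proj1 Hg)))) in Hgy; auto; [|apply mod1_in01].
  rewrite Hgy in Hcell |- *; symmetry; apply shift_same_cell; auto.
Qed.

Lemma diag_part_surj (y : R) : in01 y -> exists x, in01 x /\ diag_part n g x = y.
Proof.
  intros Hy; set (f := mod1 (INR n * y)).
  assert (Hw : in01 (f / INR n)).
  { assert (Hf : in01 f) by apply mod1_in01; destruct Hf as [Hf0 Hf1]; split.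
    - apply Rmult_le_pos; [lra | left; apply Rinv_0_lt_compat; lra].
    - apply (Rmult_lt_reg_l (INR n)); [lra|].
      replace (INR n * (f / INR n)) with f by (field; lra).
      pose proof (le_INR 1 n Hn) as Hn1; simpl in Hn1; lra. }
  destruct (proj2 (proj2 (proj1 (proj1 Hg))) _ Hw) as [x0 [Hx0 Hgx0]].
  set (k := (cell n y - cell n x0)%Z); set (x := mod1 (x0 + IZR k / INR n)).
  exists x; split; [apply mod1_in01|].
  (* both cells lie in [0, n-1] and differ by a multiple of [n] *)
  assert (Hcell : cell n x = cell n y).
  { destruct (cell_mod1_shift n k x0 Hn) as [M HM]; fold x in HM.
    pose proof (cell_range n x Hn (mod1_in01 _)); pose proof (cell_range n y Hn Hy).
    assert (M = 0%Z) by (unfold k in HM; nia); unfold k in HM; lia. }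
  assert (Hgx : mod1 (INR n * g x) = f).
  { unfold x; rewrite Crot_commute_shift, Hgx0 by auto.
    destruct (scaled_mod1_shift n k (f / INR n) Hn) as [M ->].
    replace (INR n * (f / INR n)) with f by (field; lra).
    rewrite mod1_add_IZR; apply mod1_id, mod1_in01. }
  unfold diag_part; rewrite Hgx, Hcell; unfold f; rewrite <- cell_split; field; lra.
Qed.

Lemma diag_part_rot (x : R) : in01 x -> diag_part n g (rot n x) = rot n (diag_part n g x).
Proof.
  intros Hx.
  assert (Hrot : forall z, rot n z = mod1 (z + IZR 1 / INR n))
    by (intros; unfold rot, Rdiv; simpl; rewrite Rmult_1_l; auto).
  destruct (cell_mod1_shift n 1 x Hn) as [M HM]; rewrite <- Hrot in HM.
  destruct (scaled_mod1_shift n 1 (g x) Hn) as [M' HM'].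
  rewrite <- Hrot, <- (proj2 Hg) in HM' by auto.
  rewrite (Hrot (diag_part n g x)); apply (mod1_unique _ _ M); [apply diag_part_in01, mod1_in01|].
  unfold diag_part; rewrite HM, HM', mod1_add_IZR, !plus_IZR, mult_IZR, <- INR_IZR_INZ.
  field; lra.
Qed.

Lemma diag_part_piecewise_translation : exists S, piecewise_translation (diag_part n g) S.
Proof.
  destruct (IET_piecewise_translation g (proj1 Hg)) as [Sg HPg].
  destruct (bij01_preimage_list g (0 :: cut_points n) (proj1 (proj1 Hg))) as [L HL].
  exists (Sg ++ L ++ cut_points n); intros x y Hx Hxy Hy Hcut.
  destruct (translation_between_cuts g Sg (cut_points n) L x y (proj1 (proj1 Hg)) HPg HL
              Hx Hxy Hy) as [Hlin HcutD].
  { intros s Hs; apply Hcut; rewrite app_assoc; apply in_or_app; auto. }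
  pose proof (Crot_in01 n g x Hg ltac:(split; lra)) as [? ?].
  pose proof (Crot_in01 n g y Hg ltac:(split; lra)) as [? ?].
  pose proof (Hlin y ltac:(lra)).
  assert (Hcx : cell n y = cell n x)
    by (apply cell_cut_free; auto; intros s Hs; apply Hcut; do 2 (apply in_or_app; right); auto).
  assert (Hcgx : cell n (g y) = cell n (g x)) by (apply cell_cut_free; auto; lra).
  exists 0%Z; pose proof (diag_part_shift x); pose proof (diag_part_shift y).
  rewrite Hcx, Hcgx in *; simpl; lra.
Qed.

Lemma diag_part_Crot : Crot n (diag_part n g).
Proof.
  destruct diag_part_piecewise_translation as [S HS]; split.
  - apply (piecewise_translation_IET _ S); auto; split; [|split].
    + apply diag_part_in01.
    + apply diag_part_inj.
    + apply diag_part_surj.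
  - intros x Hx; apply diag_part_rot; auto.
Qed.

Lemma diag_part_EDelta : EDelta n (diag_part n g).
Proof.
  split; [apply diag_part_Crot|]; intros i Hi; split.
  - intros x Hx; rewrite Iint_cell, cell_diag_part by auto; apply Iint_cell; auto.
  - intros y Hy; destruct (diag_part_surj y (Iint_in01 n i y Hi Hy)) as [x [Hx E]].
    exists x; split; auto; rewrite Iint_cell, <- (cell_diag_part x), E by auto.
    apply Iint_cell; auto.
Qed.

Lemma Crot_decomposition : exists p e, Pn n p /\ EDelta n e /\ feq g (fun x => p (e x)).
Proof.
  pose proof diag_part_Crot as Ec.
  destruct (bij01_exists_inv01 _ (proj1 (proj1 Ec))) as [e' He'].
  exists (fun y => g (e' y)), (diag_part n g); split; [|split; [apply diag_part_EDelta|]].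
  - split; [apply Crot_comp; auto; apply (Crot_inv n (diag_part n g)); auto|].
    intros y Hy; destruct (bij01_inv01 _ _ (proj1 (proj1 Ec)) He' y Hy) as [X E].
    exists (cell n (g (e' y)) - cell n (e' y))%Z.
    rewrite <- E at 2; rewrite <- diag_part_shift; symmetry; apply mod1_id, (Crot_in01 n); auto.
  - intros x Hx; simpl; rewrite (proj1 He' x Hx); reflexivity.
Qed.

End DiagPart.

Theorem proposition5p5 (n : nat) (hn : (2 <= n)%nat) :
  (* P_n is a normal subgroup of C(r_{1/n}) *)
  ((forall g, Pn n g -> Crot n g) /\
   Pn n idT /\
   (forall g h, Pn n g -> Pn n h -> Pn n (fun x => g (h x))) /\
   (forall g g', Pn n g -> inv01 g g' -> Pn n g') /\
   (forall g g' h, Crot n g -> inv01 g g' -> Pn n h ->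
      Pn n (fun x => g (h (g' x))))) /\
  (* P_n ∩ E^n_Delta is trivial *)
  (forall g, Pn n g -> EDelta n g -> feq g idT) /\
  (* C(r_{1/n}) = P_n · E^n_Delta *)
  (forall g, Crot n g <->
     exists p e, Pn n p /\ EDelta n e /\ feq g (fun x => p (e x))).
Proof.
  assert (Hn : (1 <= n)%nat) by lia.
  split; [|split].
  - split; [intros g [Hg _]; exact Hg|].
    split; [apply Pn_id; auto|].
    split; [apply Pn_comp|].
    split; [apply Pn_inv|].
    intros; apply Pn_conj; auto.
  - intros g; apply Pn_EDelta_id; auto.
  - intros g; split; [apply Crot_decomposition; auto|].
    intros [p [e [[Hp _] [[He _] Hpe]]]].
    apply (Crot_feq n (fun x => p (e x))); [apply Crot_comp; auto|].
    intros x Hx; symmetry; apply Hpe; auto.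
Qed.
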